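(* Let $M\subset AG_k(n)$ be the set of fibers of a skew fibration of $\mathbb R^n$ by oriented affine $k$-planes. Then $M$ is topologically closed in $AG_k(n)$. Moreover, if $(u_n,v_n)\in M$ is a sequence with no accumulation point in $M$, then $|v_n|\to\infty$.
   Context: $AG_k(n)$ is the manifold of oriented affine $k$-planes in $\mathbb R^n$; a plane is written as $(u,v)$ where $u$ is the parallel oriented linear $k$-plane and $v\in u^\perp$ is the point of the plane nearest to the origin. A fibration of $\mathbb R^n$ by oriented affine $k$-planes is a family of pairwise disjoint oriented affine $k$-planes covering $\mathbb R^n$ such that the map sending a point to its fiber is continuous; it is skew if no two distinct fibers contain parallel lines. *)

From HB Require Import structures.
From mathcomp Require Import all_boot all_order all_algebra.
From mathcomp Require Import reals.
Set Implicit Arguments. Unset Strict Implicit. Unset Printing Implicit Defensive.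
Import Order.TTheory GRing.Theory Num.Theory.
Local Open Scope ring_scope.

Section AG.
Variables (R : realType) (n k : nat).

Definition sqnorm (v : 'rV[R]_n) : R := \sum_(i < n) v ord0 i ^+ 2.
Definition frob2 (A : 'M[R]_(k, n)) : R := \sum_(i < k) \sum_(j < n) A i j ^+ 2.

(* A representative (F, v) of an oriented affine k-plane (u, v):
   the rows of F form a positively oriented orthonormal basis of u,
   and v is in u^perp. *)
Definition aplane := ('M[R]_(k, n) * 'rV[R]_n)%type.

Definition valid_plane (P : aplane) : Prop :=
  P.1 *m P.1^T = 1%:M /\ P.2 *m P.1^T = 0.

Definition pts (P : aplane) (x : 'rV[R]_n) : Prop :=
  exists y : 'rV[R]_k, x = P.2 + y *m P.1.

Definition SOk (Q : 'M[R]_k) : Prop := Q *m Q^T = 1%:M /\ \det Q = 1.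

Definition same_oplane (P P' : aplane) : Prop :=
  P'.2 = P.2 /\ exists Q, SOk Q /\ P'.1 = Q *m P.1.

(* basic neighbourhoods of the topology of AG_k(n): quotient metric
   min_{Q in SO(k)} |F - Q F'|_Frob on the oriented Grassmannian, plus |v - v'| *)
Definition ag_near (e : R) (P P' : aplane) : Prop :=
  exists Q, SOk Q /\ frob2 (P.1 - Q *m P'.1) < e /\ sqnorm (P.2 - P'.2) < e.

(* f sends a point to (a representative of) its fiber *)
Definition is_fibration (f : 'rV[R]_n -> aplane) : Prop :=
  (forall x, valid_plane (f x) /\ pts (f x) x) /\
  (forall x y, (exists z, pts (f x) z /\ pts (f y) z) -> same_oplane (f x) (f y)) /\
  (forall x e, 0 < e -> exists2 d, 0 < d &
     forall y, sqnorm (y - x) < d -> ag_near e (f x) (f y)).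

Definition skew_fibration (f : 'rV[R]_n -> aplane) : Prop :=
  forall x y, ~ same_oplane (f x) (f y) ->
  forall w : 'rV[R]_n, (w <= (f x).1)%MS -> (w <= (f y).1)%MS -> w = 0.

(* the set M of fibers, as a (saturated) set of representatives *)
Definition fibers (f : 'rV[R]_n -> aplane) (P : aplane) : Prop :=
  valid_plane P /\ exists x, same_oplane (f x) P.

Definition ag_closed (S : aplane -> Prop) : Prop :=
  forall P, valid_plane P ->
  (forall e, 0 < e -> exists P', S P' /\ ag_near e P P') -> S P.

Definition ag_accum (s : nat -> aplane) (P : aplane) : Prop :=
  forall e, 0 < e -> forall N, exists m, (N <= m)%N /\ ag_near e P (s m).

End AG.

From HB Require Import structures.
From mathcomp Require Import all_boot all_order all_algebra.
From mathcomp Require Import reals ring lra.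
From mathcomp Require Import boolp classical_sets topology normedtype.
Set Implicit Arguments. Unset Strict Implicit. Unset Printing Implicit Defensive.
Import Order.TTheory GRing.Theory Num.Theory.
Import numFieldTopology.Exports numFieldNormedType.Exports.
Local Open Scope ring_scope.

(* If fibers P_m tend to P = (u, v), they pass through points v_m -> v, so by
   continuity they also tend to the fiber through v, which must then be P.
   If |v_m| stayed bounded along a subsequence, a cluster point v of the v_m
   would make the fiber through v an accumulation point of the P_m.
   The algebraic input is that the SO(k)-orbit of an orthonormal k-frame F is
   closed: the nearest orthogonal Q for G ~ Q F is G F^T, and a matrix of
   determinant -1 stays at Frobenius distance 2 from SO(k). *)

Section Frobenius.
Variable R : realType.
Implicit Types p q r : nat.

Lemma frob2_tr p q (A : 'M[R]_(p, q)) : frob2 A = \tr (A *m A^T).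
Proof.
rewrite /frob2 /mxtrace; apply: eq_bigr => i _; rewrite mxE.
by apply: eq_bigr => j _; rewrite mxE expr2.
Qed.

Lemma frob2_ge0 p q (A : 'M[R]_(p, q)) : 0 <= frob2 A.
Proof. by apply: sumr_ge0 => i _; apply: sumr_ge0 => j _; apply: sqr_ge0. Qed.

Lemma frob2_eq0 p q (A : 'M[R]_(p, q)) : frob2 A = 0 -> A = 0.
Proof.
have sq_ge0 i (_ : true) : 0 <= A i.1 i.2 ^+ 2 by apply: sqr_ge0.
rewrite /frob2 pair_bigA /= => /(psumr_eq0P sq_ge0) A0.
by apply/matrixP => i j; rewrite mxE; apply/eqP; rewrite -sqrf_eq0 (A0 (i, j)).
Qed.

Lemma frob2_small0 p q (A : 'M[R]_(p, q)) :
  (forall e, 0 < e -> frob2 A < e) -> A = 0.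
Proof.
move=> small; apply: frob2_eq0; apply/eqP; rewrite eq_le frob2_ge0 andbT.
by apply/ler_addgt0Pr => e /small /ltW; rewrite add0r.
Qed.

Lemma frob2_trmx p q (A : 'M[R]_(p, q)) : frob2 A^T = frob2 A.
Proof.
rewrite /frob2 exchange_big.
by apply: eq_bigr => i _; apply: eq_bigr => j _; rewrite mxE.
Qed.

Lemma frob2N p q (A : 'M[R]_(p, q)) : frob2 (- A) = frob2 A.
Proof. by apply: eq_bigr => i _; apply: eq_bigr => j _; rewrite mxE sqrrN. Qed.

Lemma frob2Z p q c (A : 'M[R]_(p, q)) : frob2 (c *: A) = c ^+ 2 * frob2 A.
Proof.
rewrite /frob2 mulr_sumr; apply: eq_bigr => i _; rewrite mulr_sumr.
by apply: eq_bigr => j _; rewrite mxE exprMn.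
Qed.

Lemma frob2D_le p q (A B : 'M[R]_(p, q)) : frob2 (A + B) <= 2 * frob2 A + 2 * frob2 B.
Proof.
rewrite /frob2 !mulr_sumr -big_split /=; apply: ler_sum => i _.
rewrite !mulr_sumr -big_split /=; apply: ler_sum => j _.
rewrite mxE; have := sqr_ge0 (A i j - B i j); nra.
Qed.

Lemma frob2_mulmx_orthor p q r (X : 'M[R]_(p, r)) (F : 'M[R]_(r, q)) :
  F *m F^T = 1%:M -> frob2 (X *m F) = frob2 X.
Proof. by move=> FFt; rewrite !frob2_tr trmx_mul mulmxA -(mulmxA X) FFt mulmx1. Qed.

Lemma frob2_mulmx_orthol p q (Q : 'M[R]_p) (A : 'M[R]_(p, q)) :
  Q *m Q^T = 1%:M -> frob2 (Q *m A) = frob2 A.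
Proof.
move=> QQt; rewrite !frob2_tr trmx_mul mulmxA mxtrace_mulC !mulmxA.
by rewrite (mulmx1C QQt) mul1mx.
Qed.

(* Bessel's inequality, row by row of A. *)
Lemma frob2_proj_le p q r (A : 'M[R]_(p, q)) (F : 'M[R]_(r, q)) :
  F *m F^T = 1%:M -> frob2 (A *m F^T) <= frob2 A.
Proof.
move=> FFt; have := frob2_ge0 (A - A *m F^T *m F).
rewrite frob2_tr linearB /= !trmx_mul trmxK mulmxBl !mulmxBr.
have -> : A *m F^T *m F *m (F^T *m (F *m A^T)) = A *m F^T *m F *m A^T.
  by rewrite !mulmxA -(mulmxA _ F F^T) FFt mulmx1.
rewrite subrr subr0 raddfB /= subr_ge0.
by rewrite !frob2_tr trmx_mul trmxK !mulmxA.
Qed.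

Lemma frob2_row p (u : 'rV[R]_p) : u *m u^T = (frob2 u)%:M.
Proof.
apply/matrixP => i j; rewrite !ord1 !mxE eqxx mulr1n /frob2 big_ord1.
by apply: eq_bigr => l _; rewrite mxE expr2.
Qed.

End Frobenius.

Section SpecialOrthogonal.
Variable R : realType.
Implicit Types p : nat.

Lemma det0_unit_kernel p (A : 'M[R]_p) :
  \det A = 0 -> exists2 u : 'rV_p, u *m u^T = 1%:M & u *m A = 0.
Proof.
move=> /eqP /det0P [w w0 wA0].
have w_gt0 : 0 < frob2 w.
  by rewrite lt_def frob2_ge0 andbT; apply: contra w0 => /eqP /frob2_eq0 ->.
exists ((Num.sqrt (frob2 w))^-1 *: w); last by rewrite -scalemxAl wA0 scaler0.
rewrite frob2_row frob2Z exprVn sqr_sqrtr ?mulVf ?(ltW w_gt0) //.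
exact: lt0r_neq0.
Qed.

Lemma SOk1 p : SOk (1%:M : 'M[R]_p).
Proof. by split; rewrite ?trmx1 ?mulmx1 ?det1. Qed.

Lemma SOkM p (Q1 Q2 : 'M[R]_p) : SOk Q1 -> SOk Q2 -> SOk (Q1 *m Q2).
Proof.
move=> [Q1Q1t det1] [Q2Q2t det2]; split; last by rewrite det_mulmx det1 det2 mulr1.
by rewrite trmx_mul mulmxA -(mulmxA Q1) Q2Q2t mulmx1.
Qed.

Lemma SOkT p (Q : 'M[R]_p) : SOk Q -> SOk Q^T.
Proof. by move=> [QQt detQ]; split; rewrite ?det_tr // trmxK; apply: mulmx1C. Qed.

(* A vector u with u Q' = - u Q exists because \det (Q + Q') = 0; it gives
   |u (Q - Q')| = 2. *)
Lemma frob2_SOk_detN1 p (Q Q' : 'M[R]_p) :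
  SOk Q -> Q' *m Q'^T = 1%:M -> \det Q' = -1 -> 4 <= frob2 (Q - Q').
Proof.
move=> [QQt detQ] Q'Q't detQ'.
have detD0 : \det (Q + Q') = 0.
  have E : Q^T *m (Q + Q') *m Q'^T = (Q + Q')^T.
    rewrite mulmxDr mulmxDl (mulmx1C QQt) mul1mx -mulmxA Q'Q't mulmx1.
    by rewrite linearD /= addrC.
  have := congr1 determinant E; rewrite !det_mulmx !det_tr detQ detQ'; lra.
have [u uut uD0] := det0_unit_kernel detD0.
have uQ' : u *m Q' = - (u *m Q).
  by apply/eqP; rewrite -addr_eq0 addrC -mulmxDr uD0.
have u1 : frob2 u = 1.
  by have := congr1 (fun M : 'M[R]_1 => M ord0 ord0) uut; rewrite frob2_row !mxE.
have := frob2_proj_le (Q - Q')^T uut.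
rewrite -trmx_mul !frob2_trmx mulmxBr uQ' opprK -mulr2n -scaler_nat frob2Z.
by rewrite frob2_mulmx_orthor // u1 mulr1 -natrX.
Qed.

Section Orbit.
Variables (p q : nat) (F G : 'M[R]_(p, q)).
Hypotheses (FFt : F *m F^T = 1%:M) (GGt : G *m G^T = 1%:M).

(* G F^T is the best approximation of G by Q F over orthogonal Q, up to the
   factor 4. *)
Lemma frob2_proj_frame (Q : 'M[R]_p) : Q *m Q^T = 1%:M ->
  frob2 (Q - G *m F^T) <= frob2 (G - Q *m F) /\
  frob2 (G - G *m F^T *m F) <= 4 * frob2 (G - Q *m F).
Proof.
move=> QQt.
have dist_le : frob2 (Q - G *m F^T) <= frob2 (G - Q *m F).
  have -> : Q - G *m F^T = (Q *m F - G) *m F^T by rewrite mulmxBl -mulmxA FFt mulmx1.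
  by rewrite -opprB mulNmx frob2N; apply: frob2_proj_le.
split=> //.
have -> : G - G *m F^T *m F = (G - Q *m F) + (Q - G *m F^T) *m F.
  by rewrite mulmxBl addrA subrK.
apply: le_trans (frob2D_le _ _) _; rewrite frob2_mulmx_orthor //; lra.
Qed.

Lemma SOk_orbit_closed :
  (forall e, 0 < e -> exists Q, SOk Q /\ frob2 (G - Q *m F) < e) ->
  exists Q, SOk Q /\ G = Q *m F.
Proof.
move=> near; set Q0 := G *m F^T.
have GE : G = Q0 *m F.
  apply/eqP; rewrite -subr_eq0; apply/eqP; apply: frob2_small0 => e e0.
  have [Q [[QQt _] QF]] := near (e / 4) ltac:(by rewrite divr_gt0).
  have [_] := frob2_proj_frame QQt; lra.
have Q0Q0t : Q0 *m Q0^T = 1%:M.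
  by move: GGt; rewrite {1 2}GE trmx_mul mulmxA -(mulmxA Q0) FFt mulmx1.
exists Q0; split=> //; split=> //.
have [Q [SQ QF]] := near 1 ltr01.
have [Q0_le _] := frob2_proj_frame (proj1 SQ).
have /eqP := congr1 determinant Q0Q0t.
rewrite det_mulmx det_tr det1 -expr2 sqrf_eq1 => /orP [/eqP // | /eqP detN1].
have := frob2_SOk_detN1 SQ Q0Q0t detN1; lra.
Qed.

End Orbit.

End SpecialOrthogonal.

Section BolzanoWeierstrass.
Variables (R : realType) (n : nat).
Local Open Scope classical_set_scope.

Lemma sqnorm_bounded_cluster (u : nat -> 'rV[R]_n) (B : R) :
  (forall N, exists2 m, (N <= m)%N & sqnorm (u m) <= B) ->
  exists v, forall e, 0 < e -> forall N, exists2 m, (N <= m)%N & sqnorm (u m - v) < e.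
Proof.
move=> ub; have /choice [g gP] : forall N, exists m, (N <= m)%N /\ sqnorm (u m) <= B.
  by move=> N; have [m] := ub N; exists m.
pose w j := u (g j).
pose c := B + 1.
pose K := [set v : 'rV[R]_n | forall i, `[- c, c] (v ord0 i)].
have cK : compact K.
  by apply: (@rV_compact _ _ (fun=> `[- c, c])) => _; apply: segment_compact.
have wK : (w @ \oo) K.
  exists 0%N => // j _ i /=; have [_ uB] := gP j.
  have : (u (g j) ord0 i ^+ 2 <= B).
    apply: le_trans uB; rewrite /sqnorm (bigD1 i) //= lerDl.
    by apply: sumr_ge0 => l _; apply: sqr_ge0.
  rewrite in_itv /= /c => ?; apply/andP; split; nra.
have [v [_ vcl]] := cK _ _ wK.
exists v => e e0 N.
have e'0 : 0 < e / (n%:R + 1) by apply: divr_gt0 => //; rewrite ltr_wpDl.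
pose d := Num.sqrt (e / (n%:R + 1)).
have d0 : 0 < d by rewrite sqrtr_gt0.
have [_ [[j /= Nj <-] [_ /= wv]]] := vcl (w @` [set j | (N <= j)%N]) (ball v d)
  ltac:(by exists N => // j /= Nj; exists j) ltac:(exact: nbhsx_ballx).
exists (g j); first exact: leq_trans Nj (proj1 (gP j)).
apply: (@le_lt_trans _ _ (\sum_(i < n) d ^+ 2)).
  apply: ler_sum => i _; have := wv ord0 i; rewrite /ball /= /w !mxE ltr_norml.
  move=> /andP [lo hi]; apply/ltW; nra.
rewrite sumr_const card_ord -mulr_natl /d sqr_sqrtr ?(ltW e'0) //.
have -> : n%:R * (e / (n%:R + 1)) = e - e / (n%:R + 1) :> R.
  by field; rewrite lt0r_neq0 // ltr_wpDl.
lra.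
Qed.

End BolzanoWeierstrass.

Section AffinePlanes.
Variables (R : realType) (n k : nat).
Implicit Types (e : R) (P : aplane R n k).

Lemma sqnorm_frob2 (v : 'rV[R]_n) : sqnorm v = frob2 v.
Proof. by rewrite /frob2 big_ord1. Qed.

Lemma sqnormB_sym (v w : 'rV[R]_n) : sqnorm (v - w) = sqnorm (w - v).
Proof. by rewrite !sqnorm_frob2 -opprB frob2N. Qed.

Lemma ag_nearC e P P' : ag_near e P P' -> ag_near e P' P.
Proof.
move=> [Q [SQ [near1 near2]]]; exists Q^T; split; first exact: SOkT.
split; last by rewrite sqnormB_sym.
have QtQ : Q^T *m Q = 1%:M := mulmx1C (proj1 SQ).
have -> : P'.1 - Q^T *m P.1 = Q^T *m - (P.1 - Q *m P'.1).
  by rewrite opprB mulmxBr mulmxA QtQ mul1mx.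
by rewrite frob2_mulmx_orthol ?trmxK // frob2N.
Qed.

Lemma ag_near_trans e1 e2 P P' P'' :
  ag_near e1 P P' -> ag_near e2 P' P'' -> ag_near (2 * e1 + 2 * e2) P P''.
Proof.
move=> [Q1 [SQ1 [near11 near12]]] [Q2 [SQ2 [near21 near22]]].
exists (Q1 *m Q2); split; first exact: SOkM.
split.
  have -> : P.1 - Q1 *m Q2 *m P''.1 =
            (P.1 - Q1 *m P'.1) + Q1 *m (P'.1 - Q2 *m P''.1).
    by rewrite mulmxBr mulmxA addrA subrK.
  apply: le_lt_trans (frob2D_le _ _) _.
  rewrite frob2_mulmx_orthol; [lra | exact: proj1 SQ1].
have -> : P.2 - P''.2 = (P.2 - P'.2) + (P'.2 - P''.2) by rewrite addrA subrK.
rewrite sqnorm_frob2; apply: le_lt_trans (frob2D_le _ _) _.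
by rewrite -!sqnorm_frob2; lra.
Qed.

Lemma ag_near_le e1 e2 P P' : e1 <= e2 -> ag_near e1 P P' -> ag_near e2 P P'.
Proof.
move=> le12 [Q [SQ [near1 near2]]].
by exists Q; split=> //; split; apply: lt_le_trans le12.
Qed.

Lemma same_oplane_sym P P' : same_oplane P P' -> same_oplane P' P.
Proof.
move=> [P'2 [Q [SQ P'1]]]; split=> //; exists Q^T; split; first exact: SOkT.
by rewrite P'1 mulmxA (mulmx1C (proj1 SQ)) mul1mx.
Qed.

Lemma ag_near_same_oplane e P P' P'' :
  ag_near e P P' -> same_oplane P'' P' -> ag_near e P P''.
Proof.
move=> [Q [SQ [near1 near2]]] [P'2 [Q' [SQ' P'1]]].
exists (Q *m Q'); split; first exact: SOkM.
by rewrite -mulmxA -P'1 -P'2.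
Qed.

Lemma ag_near_limit P P' : valid_plane P -> valid_plane P' ->
  (forall e, 0 < e -> ag_near e P P') -> same_oplane P' P.
Proof.
move=> [PPt _] [P'P't _] near; split.
  apply/eqP; rewrite -subr_eq0; apply/eqP; apply: frob2_small0 => e /near.
  by move=> [_ [_ [_]]]; rewrite sqnorm_frob2.
apply: SOk_orbit_closed => // e /near [Q [SQ [near1 _]]].
by exists Q.
Qed.

End AffinePlanes.

Section Fibration.
Variables (R : realType) (n k : nat) (f : 'rV[R]_n -> aplane R n k).
Hypothesis f_fibration : is_fibration f.

Lemma fibers_f x : fibers f (f x).
Proof.
have [/(_ x) [valid_fx _] _] := f_fibration; split=> //.
by exists x; split=> //; exists 1%:M; split; [exact: SOk1 | rewrite mul1mx].
Qed.

Lemma same_oplane_fiber_foot x P : same_oplane (f x) P -> same_oplane (f P.2) P.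
Proof.
have [fP [f_same _]] := f_fibration; move=> [P2 [Q [SQ P1]]].
have [fx2 [Q' [SQ' fx1]]] : same_oplane (f P.2) (f x).
  apply: f_same; exists P.2; split; first by have [] := fP P.2.
  by exists 0; rewrite mul0mx addr0 P2.
split; first by rewrite -fx2.
by exists (Q *m Q'); split; [exact: SOkM | rewrite P1 fx1 mulmxA].
Qed.

Lemma fibers_ag_closed : ag_closed (fibers f).
Proof.
have [fP [_ f_cont]] := f_fibration.
move=> P validP near; split=> //; exists P.2.
apply: ag_near_limit validP (proj1 (fP _)) _ => e e0.
have [d d0 cont] := f_cont P.2 (e / 4) ltac:(by rewrite divr_gt0).
have [P' [[_ [x xP']] PP']] :=
  near (Num.min (e / 4) d) ltac:(by rewrite lt_min d0 divr_gt0).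
have PfP' := ag_near_same_oplane PP' (same_oplane_fiber_foot xP').
have [_ [_ [_]]] := ag_nearC PP'; rewrite lt_min => /andP [_ /cont fPfP'].
apply: ag_near_le (ag_near_trans PfP' (ag_nearC fPfP')).
have : Num.min (e / 4) d <= e / 4 by rewrite ge_min lexx.
lra.
Qed.

Lemma fibers_unbounded (s : nat -> aplane R n k) : (forall m, fibers f (s m)) ->
  ~ (exists P, fibers f P /\ ag_accum s P) ->
  forall B : R, exists N, forall m, (N <= m)%N -> B < sqnorm (s m).2.
Proof.
move=> s_fib no_accum B; apply: contrapT => not_eventually.
have bounded N : exists2 m, (N <= m)%N & sqnorm (s m).2 <= B.
  apply: contrapT => no_m; apply: not_eventually; exists N => m Nm.
  by rewrite ltNge; apply/negP => sB; apply: no_m; exists m.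
have [v v_cluster] := sqnorm_bounded_cluster bounded.
apply: no_accum; exists (f v); split; first exact: fibers_f.
move=> e e0 N; have [_ [_ f_cont]] := f_fibration.
have [d d0 cont] := f_cont v e e0.
have [m Nm /cont fvfm] := v_cluster d d0 N.
have [_ [x /same_oplane_fiber_foot /same_oplane_sym fsm]] := s_fib m.
by exists m; split=> //; apply: ag_near_same_oplane fvfm fsm.
Qed.

End Fibration.

Theorem lemma3p2 (R : realType) (n k : nat) (f : 'rV[R]_n -> aplane R n k) :
  is_fibration f -> skew_fibration f ->
  ag_closed (fibers f) /\
  (forall s : nat -> aplane R n k, (forall m, fibers f (s m)) ->
     ~ (exists P, fibers f P /\ ag_accum s P) ->
     forall B : R, exists N, forall m, (N <= m)%N -> B < sqnorm (s m).2).
Proof.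
move=> f_fibration _; split; first exact: fibers_ag_closed.
exact: fibers_unbounded.
Qed.
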